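(* Let $\mathcal{C}=(\mathcal{T},\mathcal{I},\mathcal{R})$ be an extraction context with thresholds \textit{minsupp} and \textit{minbond}. Then $\mathcal{M}in\mathcal{MCR}=\mathcal{CRCP}\cup\mathcal{M}in\mathcal{MRCP}$, with each element $J$ recorded together with $\mathit{Supp}(\wedge J)$ and $\mathit{bond}(J)$, is an exact concise representation of the set $\mathcal{RCP}$ of rare correlated patterns.
   Context: An extraction context is a triple $\mathcal{C}=(\mathcal{T},\mathcal{I},\mathcal{R})$ with $\mathcal{T}$ a finite set of transactions, $\mathcal{I}$ a finite set of items and $\mathcal{R}\subseteq\mathcal{T}\times\mathcal{I}$. For a pattern $I\subseteq\mathcal{I}$: $\mathit{Supp}(\wedge I)=|\{t:\forall i\in I,(t,i)\in\mathcal{R}\}|$, $\mathit{Supp}(\vee I)=|\{t:\exists i\in I,(t,i)\in\mathcal{R}\}|$, and for nonempty $I$, $\mathit{bond}(I)=\mathit{Supp}(\wedge I)/\mathit{Supp}(\vee I)$ (with $\mathit{bond}(\emptyset)=+\infty$ by convention). $\mathcal{RCP}=\{I\subseteq\mathcal{I}:\mathit{Supp}(\wedge I)<\textit{minsupp},\ \mathit{bond}(I)\ge\textit{minbond}\}$. $\mathcal{CRCP}=\{I\in\mathcal{RCP}:\forall I_1\supsetneq I,\ \mathit{bond}(I)>\mathit{bond}(I_1)\}$; $\mathcal{MRCP}=\{I\in\mathcal{RCP}:\forall I_1\subsetneq I,\ \mathit{bond}(I)<\mathit{bond}(I_1)\}$. Minimal rare patterns: $\mathcal{M}in\mathcal{RP}$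 is the set of patterns $I$ with $\mathit{Supp}(\wedge I)<\textit{minsupp}$ such that every proper subset $I_1\subsetneq I$ satisfies $\mathit{Supp}(\wedge I_1)\ge\textit{minsupp}$. $\mathcal{M}in\mathcal{MRCP}=\mathcal{MRCP}\cap\mathcal{M}in\mathcal{RP}$. A family $\mathcal{S}\subseteq\mathcal{RCP}$, with each $J\in\mathcal{S}$ recorded together with $\mathit{Supp}(\wedge J)$ and $\mathit{bond}(J)$, is an exact concise representation of $\mathcal{RCP}$ if, for every pattern $I\subseteq\mathcal{I}$, the recorded data alone suffice to decide whether $I\in\mathcal{RCP}$ and, when $I\in\mathcal{RCP}$, to determine exactly $\mathit{Supp}(\wedge I)$ and $\mathit{bond}(I)$. *)

From mathcomp Require Import all_boot all_order all_algebra.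
Set Implicit Arguments. Unset Strict Implicit. Unset Printing Implicit Defensive.
Import Order.TTheory GRing.Theory Num.Theory.
Local Open Scope ring_scope.

(* An extraction context: a finite set of transactions [Tr], a finite set of
   items [Item], and a relation [R : Tr -> Item -> bool]. Patterns are
   [{set Item}]. *)
Section Defs.
Variables (Tr Item : finType) (R : Tr -> Item -> bool).

Definition suppAnd (I : {set Item}) : nat :=
  #|[set t : Tr | [forall i in I, R t i]]|.

Definition suppOr (I : {set Item}) : nat :=
  #|[set t : Tr | [exists i in I, R t i]]|.

(* bond, valued in [option rat] where [None] stands for +infinity
   (the convention bond(emptyset) = +oo). *)
Definition bond (I : {set Item}) : option rat :=
  if I == set0 then None else Some ((suppAnd I)%:R / (suppOr I)%:R).

End Defs.

Definition bond_ge (b : option rat) (m : rat) : bool :=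
  if b is Some r then m <= r else true.

Definition bond_lt (b1 b2 : option rat) : bool :=
  match b1, b2 with
  | Some r1, Some r2 => r1 < r2
  | Some _, None => true
  | None, _ => false
  end.

Section Classes.
Variables (Tr Item : finType) (R : Tr -> Item -> bool).
Variables (minsupp : nat) (minbond : rat).

Definition RCP (I : {set Item}) : bool :=
  (suppAnd R I < minsupp)%N && bond_ge (bond R I) minbond.

Definition CRCP (I : {set Item}) : bool :=
  RCP I && [forall I1 : {set Item}, (I \proper I1) ==> bond_lt (bond R I1) (bond R I)].

Definition MRCP (I : {set Item}) : bool :=
  RCP I && [forall I1 : {set Item}, (I1 \proper I) ==> bond_lt (bond R I) (bond R I1)].

Definition MinRP (I : {set Item}) : bool :=
  (suppAnd R I < minsupp)%N &&
  [forall I1 : {set Item}, (I1 \proper I) ==> (minsupp <= suppAnd R I1)%N].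

Definition MinMRCP (I : {set Item}) : bool := MRCP I && MinRP I.

Definition MinMCR : {set {set Item}} := [set I | CRCP I || MinMRCP I].

End Classes.

Definition recorded (Tr Item : finType) (R : Tr -> Item -> bool)
  (S : {set {set Item}}) : {set Item} -> option (nat * option rat) :=
  fun J => if J \in S then Some (suppAnd R J, bond R J) else None.

(* A family S (depending on the context) is an exact concise representation
   of RCP if S is included in RCP and there is a single decoding procedure,
   which only sees the recorded data (not the context itself), that for every
   context and every pattern I decides whether I is in RCP and, if so, returns
   Supp(/\ I) and bond(I). The decoder may depend on the item set and the
   thresholds, but not on the transactions or on the relation R. *)
Definition exact_concise_rep (Item : finType) (minsupp : nat) (minbond : rat)
  (S : forall Tr : finType, (Tr -> Item -> bool) -> {set {set Item}}) : Prop :=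
  (forall (Tr : finType) (R : Tr -> Item -> bool),
      {subset S Tr R <= [pred I | RCP R minsupp minbond I]}) /\
  exists Dec : ({set Item} -> option (nat * option rat)) -> {set Item} ->
               option (nat * option rat),
    forall (Tr : finType) (R : Tr -> Item -> bool) (I : {set Item}),
      Dec (recorded R (S Tr R)) I =
      if RCP R minsupp minbond I then Some (suppAnd R I, bond R I) else None.

From mathcomp Require Import all_boot all_order all_algebra.
From mathcomp Require Import zify.
Import Order.TTheory GRing.Theory Num.Theory.
Local Open Scope ring_scope.

(* Bond is antitone under inclusion; along J \subset I it drops strictly when
   Supp(/\ _) does, and a nonzero bond stays constant only if Supp(/\ _) does.
   Recorded patterns are rare, so a pattern containing one is rare; conversely
   a rare correlated I contains a minimal rare subset, which is in MinMRCP.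
   For I in RCP, a maximal superset with the same bond is in CRCP, so bond(I)
   is the largest bond recorded on a superset of I, and every recorded superset
   attaining it carries Supp(/\ I). *)

Definition bond_le (b1 b2 : option rat) : bool := ~~ bond_lt b2 b1.

Lemma bond_le_ge {b1 b2 m} : bond_le b1 b2 -> bond_ge b1 m -> bond_ge b2 m.
Proof.
rewrite /bond_le; case: b1 => [r1|]; case: b2 => [r2|] //=.
by rewrite -leNgt => le12 /le_trans; apply.
Qed.

Lemma bond_le_anti b1 b2 : bond_le b1 b2 -> bond_le b2 b1 -> b1 = b2.
Proof.
rewrite /bond_le; case: b1 => [r1|]; case: b2 => [r2|] //=.
by rewrite -!leNgt => le12 le21; congr Some; apply/eqP; rewrite eq_le le12.
Qed.

Lemma bond_le_eqVlt b1 b2 : bond_le b1 b2 = (b1 == b2) || bond_lt b1 b2.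
Proof.
rewrite /bond_le; case: b1 => [r1|]; case: b2 => [r2|] //=.
by rewrite -leNgt le_eqVlt.
Qed.

Section Supports.
Context {Tr Item : finType} (R : Tr -> Item -> bool).
Implicit Types I J : {set Item}.

Lemma suppAndS {I J} : J \subset I -> (suppAnd R I <= suppAnd R J)%N.
Proof.
move=> sJI; apply/subset_leq_card/subsetP => t; rewrite !inE.
by move=> /forall_inP RtI; apply/forall_inP => i /(subsetP sJI)/RtI.
Qed.

Lemma suppOrS {I J} : J \subset I -> (suppOr R J <= suppOr R I)%N.
Proof.
move=> sJI; apply/subset_leq_card/subsetP => t; rewrite !inE.
by case/exists_inP => i /(subsetP sJI) iI Rti; apply/exists_inP; exists i.
Qed.

Lemma suppAnd_leq_suppOr {I} : I != set0 -> (suppAnd R I <= suppOr R I)%N.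
Proof.
case/set0Pn => i iI; apply/subset_leq_card/subsetP => t; rewrite !inE.
by move=> /forall_inP RtI; apply/exists_inP; exists i => //; apply: RtI.
Qed.

Lemma bond_set0 I : (bond R I == None) = (I == set0).
Proof. by rewrite /bond; case: ifP. Qed.

Lemma bondS {I J} : J \subset I -> bond_le (bond R I) (bond R J).
Proof.
move=> sJI; rewrite /bond; have [_ | nJ] := eqVneq J set0; first by case: ifP.
have nI := subset_neq0 sJI nJ; rewrite (negbTE nI) /bond_le /= -leNgt.
move: (suppAndS sJI) (suppOrS sJI) (suppAnd_leq_suppOr nI) (suppAnd_leq_suppOr nJ).
move: (suppAnd R I) (suppAnd R J) (suppOr R I) (suppOr R J) => aI aJ bI bJ.
move=> aIaJ bJbI aIbI aJbJ.
have [-> | bI_gt0] := posnP bI; first by rewrite invr0 mulr0 divr_ge0.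
have [bJ0 | bJ_gt0] := posnP bJ.
  have -> : aI = 0%N by lia.
  by rewrite mul0r divr_ge0.
rewrite ler_pdivlMr ?ltr0n // mulrAC ler_pdivrMr ?ltr0n // -!natrM ler_nat.
nia.
Qed.

Lemma bond_lt_suppAnd {I J} :
  J \subset I -> (suppAnd R I < suppAnd R J)%N -> bond_lt (bond R I) (bond R J).
Proof.
move=> sJI; rewrite /bond; have [I0 | nI] := eqVneq I set0.
  by move: sJI; rewrite I0 subset0 => /eqP ->; rewrite ltnn.
have [// | nJ] := eqVneq J set0.
move: (suppOrS sJI) (suppAnd_leq_suppOr nJ).
move: (suppAnd R I) (suppAnd R J) (suppOr R I) (suppOr R J) => aI aJ bI bJ.
move=> bJbI aJbJ aIaJ /=.
rewrite ltr_pdivrMr ?ltr0n; last by lia.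
rewrite mulrAC ltr_pdivlMr ?ltr0n; last by lia.
by rewrite -!natrM ltr_nat; nia.
Qed.

Lemma bond_eq_suppAnd {I J} : I \subset J -> bond R I != Some 0 ->
  bond R J = bond R I -> suppAnd R J = suppAnd R I.
Proof.
move=> sIJ; have [I0 _ bondJI | nI] := eqVneq I set0.
  have /eqP J0 : J == set0 by rewrite -bond_set0 bondJI bond_set0 I0.
  by rewrite I0 J0.
rewrite /bond (negbTE nI) (negbTE (subset_neq0 sIJ nI)) => bondI_neq0 [].
move: bondI_neq0 (suppAndS sIJ) (suppOrS sIJ).
move: (suppAnd R I) (suppAnd R J) (suppOr R I) (suppOr R J) => aI aJ bI bJ.
move=> bondI_neq0 aJaI bIbJ.
have [aI0 | aI_gt0] := posnP aI; first by rewrite aI0 mul0r eqxx in bondI_neq0.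
have [bI0 | bI_gt0] := posnP bI.
  by rewrite bI0 invr0 mulr0 eqxx in bondI_neq0.
move/eqP; rewrite eqr_div ?pnatr_eq0 -?lt0n //; last by lia.
by rewrite -!natrM eqr_nat => /eqP; nia.
Qed.

End Supports.

Section Representatives.
Context {Tr Item : finType} (R : Tr -> Item -> bool).
Variables (minsupp : nat) (minbond : rat).
Implicit Types I J M C : {set Item}.

Lemma MinMCR_RCP J : J \in MinMCR R minsupp minbond -> RCP R minsupp minbond J.
Proof. by rewrite inE => /orP[/andP[] | /andP[/andP[]]]. Qed.

Lemma rare_sub_MinRP {I} :
  (suppAnd R I < minsupp)%N -> exists2 M : {set Item}, M \subset I & MinRP R minsupp M.
Proof.
move=> rareI; pose rare_sub J := (J \subset I) && (suppAnd R J < minsupp)%N.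
have rare_subI : rare_sub I by rewrite /rare_sub subxx.
case: (arg_minnP (fun J => #|J|) rare_subI) => M /andP[sMI rareM] Mmin.
exists M => //; rewrite /MinRP rareM; apply/forall_inP => M1 ltM1M.
rewrite leqNgt; apply/negP => rareM1.
have : rare_sub M1 by rewrite /rare_sub rareM1 (subset_trans (proper_sub ltM1M) sMI).
by move/Mmin/(leq_trans (proper_card ltM1M)); rewrite ltnn.
Qed.

Lemma MinRP_MinMRCP M :
  MinRP R minsupp M -> RCP R minsupp minbond M -> MinMRCP R minsupp minbond M.
Proof.
move=> minM rcpM; rewrite /MinMRCP /MRCP minM rcpM andbT /=.
apply/forall_inP => M1 ltM1M; apply: bond_lt_suppAnd (proper_sub ltM1M) _.
case/andP: minM => rareM /forall_inP/(_ _ ltM1M); exact: leq_trans.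
Qed.

Lemma RCP_sub_MinMRCP I : RCP R minsupp minbond I ->
  exists2 M : {set Item}, M \subset I & MinMRCP R minsupp minbond M.
Proof.
case/andP=> rareI bondI; have [M sMI minM] := rare_sub_MinRP rareI.
exists M => //; apply: MinRP_MinMRCP => //.
rewrite /RCP (andP minM).1 /=; exact: bond_le_ge (bondS R sMI) bondI.
Qed.

Lemma RCP_sup_CRCP I : RCP R minsupp minbond I -> exists2 C : {set Item},
  I \subset C & CRCP R minsupp minbond C && (bond R C == bond R I).
Proof.
case/andP=> rareI bondI.
pose same_bond_sup J := (I \subset J) && (bond R J == bond R I).
have same_bond_supI : same_bond_sup I by rewrite /same_bond_sup subxx eqxx.
case: (arg_maxnP (fun J => #|J|) same_bond_supI) => C /andP[sIC /eqP bondC] Cmax.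
exists C => //; rewrite bondC eqxx andbT /CRCP /RCP bondC bondI andbT.
rewrite (leq_ltn_trans (suppAndS R sIC) rareI) /=.
apply/forall_inP => C1 ltCC1; have := bondS R (proper_sub ltCC1).
rewrite bond_le_eqVlt bondC => /orP[/eqP bondC1 | //].
have : same_bond_sup C1.
  by rewrite /same_bond_sup bondC1 eqxx (subset_trans sIC (proper_sub ltCC1)).
by move/Cmax/(leq_trans (proper_card ltCC1)); rewrite ltnn.
Qed.

End Representatives.

Section Decoder.
Context {Item : finType} (minbond : rat).
Implicit Types (rec : {set Item} -> option (nat * option rat)) (I J : {set Item}).

Definition rec_bond (d : option (nat * option rat)) : option rat :=
  if d is Some (_, b) then b else None.

Definition max_bond_sup rec I J :=
  [&& rec J != None, I \subset J &
      [forall J' : {set Item}, (rec J' != None) && (I \subset J') ==>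
                  bond_le (rec_bond (rec J')) (rec_bond (rec J))]].

(* Without the first test, a frequent pattern below a recorded one would be
   accepted. *)
Definition decode rec I : option (nat * option rat) :=
  if [exists J : {set Item}, (J \subset I) && (rec J != None)] then
    if [pick J | max_bond_sup rec I J] is Some J then
      if bond_ge (rec_bond (rec J)) minbond then rec J else None
    else None
  else None.

End Decoder.

Section Decoding.
Context {Tr Item : finType} (R : Tr -> Item -> bool).
Variables (minsupp : nat) (minbond : rat) (S : {set {set Item}}).
Hypothesis minbond_gt0 : 0 < minbond.
Hypothesis S_RCP : forall J, J \in S -> RCP R minsupp minbond J.
Hypothesis RCP_sub_S :
  forall I, RCP R minsupp minbond I -> exists2 J : {set Item}, J \subset I & J \in S.
Hypothesis RCP_sup_S : forall I, RCP R minsupp minbond I ->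
  exists2 C : {set Item}, I \subset C & (C \in S) && (bond R C == bond R I).
Implicit Types I J : {set Item}.

Local Notation rec := (recorded R S).

Lemma recorded_neq_None J : (rec J != None) = (J \in S).
Proof. by rewrite /recorded; case: ifP. Qed.

Lemma recorded_in J : J \in S -> rec J = Some (suppAnd R J, bond R J).
Proof. by rewrite /recorded => ->. Qed.

Lemma max_bond_sup_recorded I J : max_bond_sup rec I J -> [/\ J \in S, I \subset J &
  forall J', J' \in S -> I \subset J' -> bond_le (bond R J') (bond R J)].
Proof.
case/and3P; rewrite recorded_neq_None => JS sIJ /forallP Jmax; split=> // J' J'S sIJ'.
by have /implyP := Jmax J'; rewrite recorded_neq_None J'S sIJ' !recorded_in //; apply.
Qed.

Lemma decode_RCP I : RCP R minsupp minbond I ->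
  decode minbond rec I = Some (suppAnd R I, bond R I).
Proof.
move=> rcpI; have [_ bondI] := andP rcpI; rewrite /decode.
have [M sMI MS] := RCP_sub_S _ rcpI.
have [C sIC /andP[CS /eqP bondC]] := RCP_sup_S _ rcpI.
have -> : [exists J : {set Item}, (J \subset I) && (rec J != None)].
  by apply/existsP; exists M; rewrite sMI recorded_neq_None.
case: pickP => [J /max_bond_sup_recorded[JS sIJ Jmax] | no_max]; last first.
  have /negP[] := no_max C; apply/and3P; split; rewrite ?recorded_neq_None //.
  apply/forallP => J'; apply/implyP; rewrite recorded_neq_None => /andP[J'S sIJ'].
  by rewrite !recorded_in // bondC; apply: bondS.
have bondJ : bond R J = bond R I.
  by apply: bond_le_anti (bondS R sIJ) _; rewrite -bondC; apply: Jmax.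
have bondI_neq0 : bond R I != Some 0.
  by apply: contraTneq bondI => ->; rewrite /= -ltNge.
by rewrite recorded_in //= bondJ bondI (bond_eq_suppAnd R sIJ bondI_neq0 bondJ).
Qed.

Lemma decode_notRCP I : ~~ RCP R minsupp minbond I -> decode minbond rec I = None.
Proof.
move=> ncpI; rewrite /decode; case: existsP => // -[M /andP[sMI]].
rewrite recorded_neq_None => /S_RCP /andP[rareM _].
have rareI := leq_ltn_trans (suppAndS R sMI) rareM.
have bondI : ~~ bond_ge (bond R I) minbond by move: ncpI; rewrite /RCP rareI.
case: pickP => // J /max_bond_sup_recorded[JS sIJ _]; rewrite recorded_in //=.
by case: ifP => // /(bond_le_ge (bondS R sIJ)); rewrite (negbTE bondI).
Qed.

Lemma decode_recorded I : decode minbond rec I =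
  if RCP R minsupp minbond I then Some (suppAnd R I, bond R I) else None.
Proof. by case: ifPn => [/decode_RCP | /decode_notRCP]. Qed.

End Decoding.

Theorem mainTheorem7 (Item : finType) (minsupp : nat) (minbond : rat)
  (hminbond : 0 < minbond) :
  exact_concise_rep minsupp minbond
    (fun (Tr : finType) (R : Tr -> Item -> bool) => MinMCR R minsupp minbond).
Proof.
split=> [Tr R J /MinMCR_RCP // | ].
exists (decode minbond) => Tr R I.
apply: (decode_recorded R minsupp minbond _ hminbond) => [J | J | J].
- exact: MinMCR_RCP.
- move/RCP_sub_MinMRCP => [M sMJ minM].
  by exists M; rewrite // inE minM orbT.
- move/RCP_sup_CRCP => [C sJC /andP[crcpC bondC]].
  by exists C; rewrite // inE crcpC bondC.
Qed.
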